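(* Let $(R,\mathfrak m,k)$ be a commutative noetherian local ring with $\mathfrak m^4=0$ and $H_R(-1)=0$. Suppose $a,b\in\mathfrak m\smallsetminus\mathfrak m^2$ form an exact pair of zero divisors. Then: (1) the initial forms $a^*,b^*$ in $\operatorname{gr}_{\mathfrak m}(R)$ form an exact pair of zero divisors in $\operatorname{gr}_{\mathfrak m}(R)$; (2) the graded rings $\operatorname{gr}_{\mathfrak m/aR}(R/aR)$ and $\operatorname{gr}_{\mathfrak m}(R)/a^*\operatorname{gr}_{\mathfrak m}(R)$ are naturally isomorphic (via the map induced by $R\to R/aR$); (3) $H_{\operatorname{gr}_{\mathfrak m}(R)/a^*\operatorname{gr}_{\mathfrak m}(R)}(t)=H_{R/aR}(t)=H_R(t)(1+t)^{-1}$.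
   Context: $H_R(t)=\sum_{n\ge0}\operatorname{rank}_k(\mathfrak m^n/\mathfrak m^{n+1})t^n$ is the Hilbert series of the local ring $R$ (for graded rings, the Hilbert series is $\sum_n \operatorname{rank}_k(\text{degree-}n\text{ part})t^n$). $\operatorname{gr}_{\mathfrak m}(R)=\bigoplus_{n\ge0}\mathfrak m^n/\mathfrak m^{n+1}$ is the associated graded ring, and $r^*$ denotes the initial form of $r\in R$. Elements $a,b$ of a ring form an exact pair of zero divisors if they are nonzero non-units with $(0:a)=bR$ and $(0:b)=aR$. *)

From HB Require Import structures.
From mathcomp Require Import all_boot all_order all_algebra.
Set Implicit Arguments. Unset Strict Implicit. Unset Printing Implicit Defensive.
Import Order.TTheory GRing.Theory Num.Theory.
Local Open Scope ring_scope.

Section CommAlg.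
Variable R : comNzRingType.

(* units / the maximal ideal of a local ring (= the non-units) *)
Definition is_unit (x : R) : Prop := exists y, x * y = 1.
Definition maxid (x : R) : Prop := ~ is_unit x.

Definition is_ideal (I : R -> Prop) : Prop :=
  [/\ I 0, (forall x y, I x -> I y -> I (x + y)) & (forall r x, I x -> I (r * x))].

Definition noetherian : Prop :=
  forall I : nat -> R -> Prop, (forall n, is_ideal (I n)) ->
    (forall n x, I n x -> I n.+1 x) ->
    exists N, forall n x, (N <= n)%N -> I n x -> I N x.

(* local: the non-units form an ideal (equivalently: a unique maximal ideal) *)
Definition local_ring : Prop := is_ideal maxid.

Inductive ideal_prod (I J : R -> Prop) : R -> Prop :=
  | ip_zero : ideal_prod I J 0
  | ip_prod x y : I x -> J y -> ideal_prod I J (x * y)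
  | ip_add u v : ideal_prod I J u -> ideal_prod I J v -> ideal_prod I J (u + v).

Fixpoint mpow (n : nat) : R -> Prop :=
  match n with
  | 0 => fun _ => True
  | n'.+1 => ideal_prod maxid (mpow n')
  end.

(* rank_k (m^n / m^(n+1)) = d, k = R/m, written out literally: there are
   d elements of m^n whose classes form a k-basis of m^n/m^(n+1) *)
Definition hilb_rank (n d : nat) : Prop :=
  exists x : 'I_d -> R, (forall i, mpow n (x i)) /\
    (forall y, mpow n y -> exists r : 'I_d -> R,
        mpow n.+1 (y - \sum_(i < d) r i * x i)) /\
    (forall r : 'I_d -> R, mpow n.+1 (\sum_(i < d) r i * x i) ->
        forall i, maxid (r i)).

Definition exact_pair (a b : R) : Prop :=
  [/\ a != 0 /\ b != 0, ~ is_unit a, ~ is_unit b,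
      (forall x, a * x = 0 <-> exists y, x = b * y) &
      (forall x, b * x = 0 <-> exists y, x = a * y)].

End CommAlg.

(* (G, pi) is (a model of) the associated graded ring gr_m(R) = (+)_n m^n/m^(n+1):
   pi n : m^n -> G is the map x |-> class of x in degree n. These axioms
   determine G up to unique graded isomorphism. *)
Definition is_assoc_graded (R G : comNzRingType) (pi : nat -> R -> G) : Prop :=
  [/\ (forall n x y, mpow n x -> mpow n y -> pi n (x + y) = pi n x + pi n y),
      (forall n x, mpow n x -> (pi n x = 0 <-> mpow n.+1 x)),
      (forall i j x y, mpow i x -> mpow j y -> pi (i + j)%N (x * y) = pi i x * pi j y),
      (forall g : G, exists N (x : nat -> R),
          (forall n, mpow n (x n)) /\ g = \sum_(n < N) pi n (x n)) &
      (forall N (x : nat -> R), (forall n, mpow n (x n)) ->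
          \sum_(n < N) pi n (x n) = 0 -> forall n, (n < N)%N -> mpow n.+1 (x n))].

Definition gr_hom (R G : comNzRingType) (pi : nat -> R -> G) (n : nat) (g : G) : Prop :=
  exists x, mpow n x /\ g = pi n x.

(* rank of the degree-n part T_n of a graded ring over its degree-0 part T_0
   (a field in our situation, identified with k) *)
Definition graded_rank (T : comNzRingType) (hom : nat -> T -> Prop) (n d : nat) : Prop :=
  exists x : 'I_d -> T, (forall i, hom n (x i)) /\
    (forall y, hom n y -> exists c : 'I_d -> T, (forall i, hom 0%N (c i)) /\
        y = \sum_(i < d) c i * x i) /\
    (forall c : 'I_d -> T, (forall i, hom 0%N (c i)) ->
        \sum_(i < d) c i * x i = 0 -> forall i, c i = 0).

From HB Require Import structures.
From mathcomp Require Import all_boot all_order all_algebra.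
From Stdlib Require Import ClassicalEpsilon Classical_Prop.
From mathcomp Require Import ring zify.
Set Implicit Arguments. Unset Strict Implicit. Unset Printing Implicit Defensive.
Import Order.TTheory GRing.Theory Num.Theory.
Local Open Scope ring_scope.

(* Fix k-bases of the m^n/m^(n+1), k = R/m, and let A_n, B_n : k^(h n) -> k^(h (n+1))
   be the matrices of multiplication by a and b.  The class of b is a nonzero vector
   of ker A_1, so rank A_1, rank B_1 <= h 1 - 1.  As m^4 = 0, a y in m^4 forces y in
   bR, so ker A_2 lies in the image of B_1 and rank A_2 >= h 2 - h 1 + 1, which is
   h 3 because h 0 = 1 and H_R(-1) = 0.  All these bounds are therefore equalities,
   symmetrically in a and b, and the sequences ... -A-> . -B-> . -A-> ... of
   multiplication maps between the m^n/m^(n+1) are exact; lifting to the graded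
   ring gives (1).  The same ranks show that aR meets m^(n+1) inside
   a m^n + m^(n+2), i.e. a* generates the initial ideal of aR: this is (2), and
   both Hilbert functions in (3) are h n - rank A_(n-1). *)

Section LocalRing.
Variable R : comNzRingType.
Hypothesis R_local : local_ring R.

Lemma maxid0 : maxid (0 : R). Proof. by case: R_local. Qed.

Lemma maxidD (x y : R) : maxid x -> maxid y -> maxid (x + y).
Proof. by case: R_local => _ + _; apply. Qed.

Lemma maxidM (r x : R) : maxid x -> maxid (r * x).
Proof. by case: R_local => _ _; apply. Qed.

Lemma maxidMr (r x : R) : maxid x -> maxid (x * r).
Proof. by rewrite mulrC; apply: maxidM. Qed.

Lemma maxidB (x y : R) : maxid x -> maxid y -> maxid (x - y).
Proof. by move=> hx hy; apply: maxidD => //; rewrite -mulN1r; apply: maxidM. Qed.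

Lemma not_maxid1 : ~ maxid (1 : R).
Proof. by apply; exists 1; rewrite mulr1. Qed.

Lemma unit_of_not_maxid (x : R) : ~ maxid x -> is_unit x.
Proof. by move=> hx; apply: NNPP. Qed.

Lemma ideal_prodM (I J : R -> Prop) r x :
  (forall r y, J y -> J (r * y)) -> ideal_prod I J x -> ideal_prod I J (r * x).
Proof.
move=> hJ; elim=> [|u v hu hv|u v _ IHu _ IHv].
- by rewrite mulr0; apply: ip_zero.
- by rewrite mulrCA; apply: ip_prod => //; apply: hJ.
- by rewrite mulrDr; apply: ip_add.
Qed.

Lemma mpow_ideal n : is_ideal (@mpow R n).
Proof.
elim: n => [|n [_ _ hM]]; first by split.
split=> /=; [exact: ip_zero | by move=> x y; apply: ip_add | by move=> r x; apply: ideal_prodM].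
Qed.

Lemma mpow0 n : mpow n (0 : R). Proof. by case: (mpow_ideal n). Qed.

Lemma mpowD n (x y : R) : mpow n x -> mpow n y -> mpow n (x + y).
Proof. by case: (mpow_ideal n) => _ + _; apply. Qed.

Lemma mpowM n (r x : R) : mpow n x -> mpow n (r * x).
Proof. by case: (mpow_ideal n) => _ _; apply. Qed.

Lemma mpowMr n (r x : R) : mpow n x -> mpow n (x * r).
Proof. by rewrite mulrC; apply: mpowM. Qed.

Lemma mpowN n (x : R) : mpow n x -> mpow n (- x).
Proof. by rewrite -mulN1r; apply: mpowM. Qed.

Lemma mpowB n (x y : R) : mpow n x -> mpow n y -> mpow n (x - y).
Proof. by move=> hx hy; apply: mpowD => //; apply: mpowN. Qed.

Lemma mpow_sum n (I : finType) (F : I -> R) :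
  (forall i, mpow n (F i)) -> mpow n (\sum_i F i).
Proof. by move=> hF; apply: (big_ind (@mpow R n)) => //; [exact: mpow0 | exact: mpowD]. Qed.

Lemma mpowS n (x : R) : mpow n.+1 x -> mpow n x.
Proof.
elim: n x => [//|n IH] x /=.
elim=> [|u v hu hv|u v _ IHu _ IHv]; first exact: ip_zero.
- by apply: ip_prod => //; apply: IH.
- exact: ip_add.
Qed.

Lemma mpow_leq m n (x : R) : (m <= n)%N -> mpow n x -> mpow m x.
Proof. by move=> /subnK <-; elim: (n - m)%N => [//|d IH] /mpowS. Qed.

Lemma mpow1P (x : R) : mpow 1 x <-> maxid x.
Proof.
split=> [|hx]; last by rewrite -[x]mulr1; apply: ip_prod.
elim=> [|u v hu _|u v _ IHu _ IHv]; [exact: maxid0 | exact: maxidMr | exact: maxidD].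
Qed.

Lemma mpow_maxidM n (x y : R) : maxid x -> mpow n y -> mpow n.+1 (x * y).
Proof. exact: ip_prod. Qed.

Lemma mpow_mul i j (x y : R) : mpow i x -> mpow j y -> mpow (i + j) (x * y).
Proof.
elim: i x => [|i IH] x hx hy; first by rewrite add0n; apply: mpowM.
rewrite addSn /=; elim: hx => [|u v hu hv|u v _ IHu _ IHv].
- by rewrite mul0r; apply: ip_zero.
- by rewrite -mulrA; apply: ip_prod => //; apply: IH.
- by rewrite mulrDl; apply: ip_add.
Qed.

Lemma mpowX n (x : R) : mpow 1 x -> mpow n (x ^+ n).
Proof.
move=> hx; elim: n => [//|n IH]; rewrite exprS.
by have := mpow_mul hx IH; rewrite add1n.
Qed.

Lemma mpow_pad N (x : nat -> R) : (forall n, mpow n (x n)) ->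
  forall n, mpow n (if (n < N)%N then x n else 0).
Proof. by move=> hx n; case: ifP => _; [apply: hx | apply: mpow0]. Qed.

End LocalRing.

Section ResidueField.
Variable R : comNzRingType.
Hypothesis R_local : local_ring R.

Definition maxidb : pred R :=
  fun x => if excluded_middle_informative (maxid x) then true else false.

Lemma maxidbP (x : R) : reflect (maxid x) (x \in maxidb).
Proof. by rewrite unfold_in /maxidb; case: excluded_middle_informative => H; constructor. Qed.

Lemma maxidb_idealr_closed : idealr_closed maxidb.
Proof.
split; [exact/maxidbP/(maxid0 R_local) | by apply/negP => /maxidbP/not_maxid1 |].
move=> c u v /maxidbP hu /maxidbP hv; apply/maxidbP.
by apply: (maxidD R_local) hv; apply: (maxidM R_local).
Qed.

Definition maxid_ideal : idealr R :=
  HB.pack maxidb (GRing.isZmodClosed.Build _ maxidb (idealr_closedB maxidb_idealr_closed))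
    (isProperIdeal.Build _ maxidb (idealr_closed_nontrivial maxidb_idealr_closed)).

Definition residue := {ideal_quot maxid_ideal}.
Definition resid (x : R) : residue := \pi_residue%qT x.
Definition unresid (z : residue) : R := repr z.

Lemma residD x y : resid (x + y) = resid x + resid y. Proof. by rewrite /resid !piE. Qed.
Lemma residM x y : resid (x * y) = resid x * resid y. Proof. by rewrite /resid !piE. Qed.
Lemma residN x : resid (- x) = - resid x. Proof. by rewrite /resid !piE. Qed.
Lemma resid1 : resid 1 = 1. Proof. by rewrite /resid !piE. Qed.
Lemma resid0 : resid 0 = 0. Proof. by rewrite /resid !piE. Qed.
Lemma unresidK z : resid (unresid z) = z. Proof. exact: reprK. Qed.

Lemma resid_eq x y : resid x = resid y <-> maxid (x - y).
Proof.
rewrite /resid; split=> [/eqP|H]; last by apply/eqP; rewrite -Quotient.idealrBE; apply/maxidbP.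
by rewrite -Quotient.idealrBE => /maxidbP.
Qed.

Lemma resid_eq0 x : resid x = 0 <-> maxid x.
Proof. by rewrite -resid0 resid_eq subr0. Qed.

Definition unit_inv (x : R) : R :=
  if excluded_middle_informative (is_unit x) is left H
  then proj1_sig (constructive_indefinite_description _ H) else 0.

Lemma unit_invP x : is_unit x -> x * unit_inv x = 1.
Proof.
rewrite /unit_inv; case: excluded_middle_informative => // H _.
by case: constructive_indefinite_description.
Qed.

Definition resid_inv (z : residue) : residue := resid (unit_inv (unresid z)).

Lemma resid_mulVf z : z != 0 -> resid_inv z * z = 1.
Proof.
move=> nz; rewrite /resid_inv -{2}(unresidK z) -residM mulrC unit_invP ?resid1 //.
apply: unit_of_not_maxid => /resid_eq0; rewrite unresidK => z0.
by rewrite z0 eqxx in nz.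
Qed.

Lemma resid_inv0 : resid_inv 0 = 0.
Proof.
rewrite /resid_inv /unit_inv; case: excluded_middle_informative => [H|_]; last exact: resid0.
have /resid_eq0 hm : resid (unresid 0) = 0 by rewrite unresidK.
by case: (hm H).
Qed.

HB.instance Definition _ := GRing.ComNzRing.on residue.
HB.instance Definition _ := GRing.ComNzRing_isField.Build residue resid_mulVf resid_inv0.

Definition residue_field : fieldType := residue.

End ResidueField.

Lemma alt_sumS (V : pzRingType) (f : nat -> V) n :
  \sum_(i < n.+2) (-1) ^+ (n.+1 - i) * f i = f n.+1 - \sum_(i < n.+1) (-1) ^+ (n - i) * f i.
Proof.
rewrite big_ord_recr /= subnn expr0 mul1r addrC -sumrN; congr (_ + _).
by apply: eq_bigr => i _; rewrite subSn ?exprS ?mulN1r ?mulNr // -ltnS.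
Qed.

Section ComplementBase.
Variables (F : fieldType) (m n : nat) (W : 'M[F]_(m, n)).

Lemma compl_base_span (v : 'rV[F]_n) :
  exists c : 'rV[F]_(\rank (W^C)%MS), (v - c *m row_base W^C <= W)%MS.
Proof.
have /sub_addsmxP [[u1 u2] /= ->] : (v <= W + W^C)%MS by apply/submx_full/addsmx_compl_full.
have /submxP [c ->] : (u2 *m W^C <= row_base W^C)%MS by rewrite eq_row_base submxMl.
by exists c; rewrite addrK submxMl.
Qed.

Lemma compl_base_free (c : 'rV[F]_(\rank (W^C)%MS)) : (c *m row_base W^C <= W)%MS -> c = 0.
Proof.
move=> cW; have cWC : (c *m row_base W^C <= W^C)%MS by rewrite -(eq_row_base (W^C)%MS) submxMl.
have : (c *m row_base W^C <= W :&: W^C)%MS by rewrite sub_capmx cW cWC.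
by rewrite capmx_compl submx0 (mulmx_free_eq0 _ (row_base_free _)) => /eqP.
Qed.

End ComplementBase.

Section AssocGraded.
Variables (R G : comNzRingType) (pi : nat -> R -> G).
Hypothesis pi_gr : is_assoc_graded pi.

Lemma grD n x y : mpow n x -> mpow n y -> pi n (x + y) = pi n x + pi n y.
Proof. by case: pi_gr => + _ _ _ _; apply. Qed.

Lemma gr_eq0 n x : mpow n x -> (pi n x = 0 <-> mpow n.+1 x).
Proof. by case: pi_gr => _ + _ _ _; apply. Qed.

Lemma grM i j x y : mpow i x -> mpow j y -> pi (i + j)%N (x * y) = pi i x * pi j y.
Proof. by case: pi_gr => _ _ + _ _; apply. Qed.

Lemma gr_decomp g :
  exists N (x : nat -> R), (forall n, mpow n (x n)) /\ g = \sum_(n < N) pi n (x n).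
Proof. by case: pi_gr => _ _ _ + _; apply. Qed.

Lemma gr_sum_eq0 N (x : nat -> R) : (forall n, mpow n (x n)) ->
  \sum_(n < N) pi n (x n) = 0 -> forall n, (n < N)%N -> mpow n.+1 (x n).
Proof. by case: pi_gr => _ _ _ _; apply. Qed.

Lemma grM1 n x y : mpow 1 x -> mpow n y -> pi n.+1 (x * y) = pi 1 x * pi n y.
Proof. exact: grM. Qed.

Lemma gr0 n : pi n 0 = 0.
Proof.
apply: (addrI (pi n 0)); rewrite addr0 -grD ?addr0 //; exact: mpow0.
Qed.

Lemma gr_high n x : mpow n.+1 x -> pi n x = 0.
Proof. by move=> hx; apply/(gr_eq0 (mpowS hx)). Qed.

Lemma grB n x y : mpow n x -> mpow n y -> pi n (x - y) = pi n x - pi n y.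
Proof.
move=> hx hy; apply: (addIr (pi n y)).
by rewrite subrK -grD ?subrK //; apply: mpowB.
Qed.

Lemma gr_eqm n x y : mpow n x -> mpow n y -> mpow n.+1 (x - y) -> pi n x = pi n y.
Proof.
move=> hx hy hxy; apply/eqP; rewrite -subr_eq0 -grB //.
exact/eqP/(gr_eq0 (mpowB hx hy)).
Qed.

Lemma gr_sum n (I : finType) (F : I -> R) :
  (forall i, mpow n (F i)) -> pi n (\sum_i F i) = \sum_i pi n (F i).
Proof.
move=> hF; suff [] : pi n (\sum_i F i) = \sum_i pi n (F i) /\ mpow n (\sum_i F i) by [].
apply: (big_ind2 (fun a b => pi n a = b /\ mpow n a)) => //.
- by rewrite gr0; split => //; apply: mpow0.
- by move=> a b c d [<- ha] [<- hc]; rewrite grD //; split => //; apply: mpowD.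
Qed.

Lemma gr1 : pi 0 1 = 1.
Proof.
have [N [x [hx e]]] := gr_decomp 1.
rewrite -[LHS]mulr1 {1 2}e mulr_sumr; apply: eq_bigr => n _.
by rewrite -(grM (I : @mpow R 0 1) (hx n)) mul1r.
Qed.

Lemma grX n x : mpow 1 x -> pi n (x ^+ n) = pi 1 x ^+ n.
Proof.
move=> hx; elim: n => [|n IH]; first by rewrite !expr0 gr1.
by rewrite !exprS grM1 ?IH //; apply: mpowX.
Qed.

Lemma gr_widen N P (x : nat -> R) : (N <= P)%N ->
  \sum_(n < N) pi n (x n) = \sum_(n < P) pi n (if (n < N)%N then x n else 0).
Proof.
move=> hNP; rewrite (big_ord_widen P (fun n => pi n (x n))) // big_mkcond.
by apply: eq_bigr => i _; case: ifP; rewrite ?gr0.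
Qed.

Lemma gr_single n x : \sum_(m < n.+1) pi m (if m == n :> nat then x else 0) = pi n x.
Proof.
rewrite big_ord_recr /= eqxx big1 ?add0r // => i _.
by rewrite ltn_eqF ?gr0.
Qed.

Lemma gr_factor (t : R) N (x : nat -> R) :
  (forall n, (n < N)%N -> exists2 z, mpow n.-1 z & pi n (x n) = pi 1 t * pi n.-1 z) ->
  exists g, \sum_(n < N) pi n (x n) = pi 1 t * g.
Proof.
move=> hz.
have hz' n : exists z, (n < N)%N -> mpow n.-1 z /\ pi n (x n) = pi 1 t * pi n.-1 z.
  by case: (ltnP n N) => [/hz [z hz1 hz2]|hn]; [exists z | exists 0].
pose z n := proj1_sig (constructive_indefinite_description _ (hz' n)).
have hzP n : (n < N)%N -> mpow n.-1 (z n) /\ pi n (x n) = pi 1 t * pi n.-1 (z n).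
  by rewrite /z; case: constructive_indefinite_description.
exists (\sum_(n < N) pi n.-1 (z n)); rewrite mulr_sumr; apply: eq_bigr => n _.
by case: (hzP n (ltn_ord n)).
Qed.

Definition gr_size (g : G) : nat :=
  proj1_sig (constructive_indefinite_description _ (gr_decomp g)).

Definition gr_comp (g : G) : nat -> R :=
  proj1_sig (constructive_indefinite_description _
    (proj2_sig (constructive_indefinite_description _ (gr_decomp g)))).

Lemma gr_compP g :
  (forall n, mpow n (gr_comp g n)) /\ g = \sum_(n < gr_size g) pi n (gr_comp g n).
Proof.
rewrite /gr_comp /gr_size; case: (constructive_indefinite_description _ _) => N /= hN.
by case: constructive_indefinite_description.
Qed.

End AssocGraded.

Section Coordinates.
Variable R : comNzRingType.
Hypothesis R_local : local_ring R.
Variable h : nat -> nat.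
Hypothesis R_hilb : forall n, hilb_rank R n (h n).

Local Notation k := (residue_field R_local).
Local Notation resid := (resid R_local).
Local Notation unresid := (@unresid R R_local).

Definition basis n : 'I_(h n) -> R :=
  proj1_sig (constructive_indefinite_description _ (R_hilb n)).
Arguments basis : clear implicits.

Lemma basis_spec n :
  [/\ (forall i, mpow n (basis n i)),
      (forall y, mpow n y -> exists r, mpow n.+1 (y - \sum_i r i * basis n i)) &
      (forall r, mpow n.+1 (\sum_i r i * basis n i) -> forall i, maxid (r i))].
Proof. by rewrite /basis; case: constructive_indefinite_description => x [? []]. Qed.

Lemma mpow_comb n (r : 'I_(h n) -> R) : mpow n (\sum_i r i * basis n i).
Proof. by case: (basis_spec n) => hb _ _; apply: mpow_sum => i; apply: mpowM. Qed.

(* Junk: [coef n y] is [0] when [y] is not in [m^n]. *)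
Definition coef n y : 'I_(h n) -> R :=
  if excluded_middle_informative (mpow n y) is left H
  then proj1_sig (constructive_indefinite_description _
         (let: And3 _ hs _ := basis_spec n in hs y H))
  else fun _ => 0.
Arguments coef : clear implicits.

Lemma coefP n y : mpow n y -> mpow n.+1 (y - \sum_i coef n y i * basis n i).
Proof.
rewrite /coef; case: excluded_middle_informative => // H _.
by case: constructive_indefinite_description.
Qed.

Definition coord n y : 'rV[k]_(h n) := \row_i resid (coef n y i).
Definition uncoord n (v : 'rV[k]_(h n)) : R := \sum_i unresid (v 0 i) * basis n i.
Arguments coord : clear implicits.
Arguments uncoord : clear implicits.

Lemma uncoord_mpow n v : mpow n (uncoord n v).
Proof. exact: mpow_comb. Qed.

Lemma coord_by_basis n y (r : 'I_(h n) -> R) :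
  mpow n y -> mpow n.+1 (y - \sum_i r i * basis n i) -> coord n y = \row_i resid (r i).
Proof.
move=> hy hr; apply/rowP => i; rewrite !mxE; apply/(resid_eq R_local).
case: (basis_spec n) => _ _ /(_ (fun i => coef n y i - r i)); apply.
have -> : \sum_i (coef n y i - r i) * basis n i =
   (y - \sum_i r i * basis n i) - (y - \sum_i coef n y i * basis n i).
  by rewrite (eq_bigr (fun i => coef n y i * basis n i - r i * basis n i)) ?sumrB;
    [ring | move=> j _; rewrite mulrBl].
by apply: mpowB => //; apply: coefP.
Qed.

Lemma coordD n x y : mpow n x -> mpow n y -> coord n (x + y) = coord n x + coord n y.
Proof.
move=> hx hy; rewrite (@coord_by_basis n (x + y) (fun i => coef n x i + coef n y i)).
- by apply/rowP => i; rewrite !mxE (residD R_local).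
- exact: mpowD.
have -> : x + y - \sum_i (coef n x i + coef n y i) * basis n i =
  (x - \sum_i coef n x i * basis n i) + (y - \sum_i coef n y i * basis n i).
  by rewrite (eq_bigr (fun i => coef n x i * basis n i + coef n y i * basis n i))
    ?big_split /=; [ring | move=> j _; rewrite mulrDl].
by apply: mpowD; apply: coefP.
Qed.

Lemma coordZ n c y : mpow n y -> coord n (c * y) = resid c *: coord n y.
Proof.
move=> hy; rewrite (@coord_by_basis n (c * y) (fun i => c * coef n y i)).
- by apply/rowP => i; rewrite !mxE (residM R_local).
- exact: mpowM.
have -> : c * y - \sum_i (c * coef n y i) * basis n i = c * (y - \sum_i coef n y i * basis n i).
  by rewrite mulrBr mulr_sumr; congr (_ - _); apply: eq_bigr => j _; rewrite mulrA.
by apply: mpowM; apply: coefP.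
Qed.

Lemma coord0 n : coord n 0 = 0.
Proof. by rewrite -(mul0r 0) coordZ ?(resid0 R_local) ?scale0r //; apply: mpow0. Qed.

Lemma coordB n x y : mpow n x -> mpow n y -> coord n (x - y) = coord n x - coord n y.
Proof.
move=> hx hy; rewrite coordD //; last exact: mpowN.
rewrite -[- y]mulN1r coordZ //.
by rewrite (residN R_local) (resid1 R_local) scaleN1r.
Qed.

Lemma coord_sum n (I : finType) (F : I -> R) :
  (forall i, mpow n (F i)) -> coord n (\sum_i F i) = \sum_i coord n (F i).
Proof.
move=> hF; suff [] : \sum_i coord n (F i) = coord n (\sum_i F i) /\ mpow n (\sum_i F i) by [].
apply: (big_ind2 (fun a b => a = coord n b /\ mpow n b)) => //.
- by rewrite coord0; split => //; apply: mpow0.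
- by move=> a b c d [-> hb] [-> hd]; rewrite coordD //; split => //; apply: mpowD.
Qed.

Lemma coord_eq0 n y : mpow n y -> coord n y = 0 <-> mpow n.+1 y.
Proof.
move=> hy; split=> [/rowP c0|hy1]; last first.
  rewrite (@coord_by_basis n y (fun _ => 0)) //.
    by apply/rowP => i; rewrite !mxE (resid0 R_local).
  by rewrite big1 ?subr0 // => i _; rewrite mul0r.
rewrite -(subrK (\sum_i coef n y i * basis n i) y); apply: mpowD; first exact: coefP.
apply: mpow_sum => i; case: (basis_spec n) => hb _ _.
have /(resid_eq0 R_local) hc : resid (coef n y i) = 0 by have := c0 i; rewrite !mxE.
by rewrite -add1n; apply: mpow_mul => //; apply/(mpow1P R_local).
Qed.

Lemma coord_eq n x y : mpow n x -> mpow n y -> coord n x = coord n y <-> mpow n.+1 (x - y).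
Proof.
move=> hx hy; rewrite -(coord_eq0 (mpowB hx hy)) coordB //.
by split=> [->|/eqP]; [rewrite subrr | rewrite subr_eq0 => /eqP].
Qed.

Lemma uncoordK n : cancel (uncoord n) (coord n).
Proof.
move=> v; rewrite (@coord_by_basis n (uncoord n v) (fun i => unresid (v 0 i))).
- by apply/rowP => i; rewrite !mxE unresidK.
- exact: uncoord_mpow.
by rewrite subrr; apply: mpow0.
Qed.

Lemma coord_neq0 n y : mpow n y -> ~ mpow n.+1 y -> coord n y != 0.
Proof. by move=> hy hn; apply/eqP => /(coord_eq0 hy). Qed.

Lemma coord_deg0 (v : 'rV[k]_(h 0)) : (v <= coord 0 1)%MS.
Proof. by rewrite -(uncoordK v) -[uncoord 0 v]mulr1 coordZ // scalemx_sub. Qed.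

Lemma h0 : h 0 = 1%N.
Proof.
have nz : coord 0 1 != 0 by apply: coord_neq0 => // /(mpow1P R_local)/not_maxid1.
have s1 : ((1%:M : 'M[k]_(h 0)) <= coord 0 1)%MS by apply/row_subP => i; apply: coord_deg0.
have := mxrankS s1; rewrite mxrank1 rank_rV nz => le1.
have := rank_leq_col (coord 0 1); rewrite rank_rV nz.
by case: (h 0) le1 => [|[|]].
Qed.

Definition mult_mx (t : R) n : 'M[k]_(h n, h n.+1) :=
  \matrix_(i, j) coord n.+1 (t * basis n i) 0 j.
Arguments mult_mx : clear implicits.

Lemma coord_mul t n y : maxid t -> mpow n y ->
  coord n.+1 (t * y) = coord n y *m mult_mx t n.
Proof.
move=> ht hy; pose z := \sum_i coef n y i * basis n i.
have hz : mpow n z by apply: mpow_comb.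
rewrite (proj2 (coord_eq (mpow_maxidM ht hy) (mpow_maxidM ht hz))); last first.
  by rewrite -mulrBr; apply: mpow_maxidM => //; apply: coefP.
case: (basis_spec n) => hb _ _.
rewrite /z mulr_sumr (eq_bigr (fun i => coef n y i * (t * basis n i))); last first.
  by move=> i _; rewrite mulrCA mulrA.
rewrite coord_sum; last by move=> i; apply/mpowM/mpow_maxidM.
apply/rowP => j; rewrite !mxE summxE; apply: eq_bigr => i _.
by rewrite coordZ ?mxE //; apply: mpow_maxidM.
Qed.

Lemma sub_mult_mxP t n x : maxid t -> mpow n.+1 x ->
  (coord n.+1 x <= mult_mx t n)%MS -> exists2 s, mpow n s & mpow n.+2 (x - t * s).
Proof.
move=> ht hx /submxP [w hw]; exists (uncoord n w); first exact: uncoord_mpow.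
apply/coord_eq => //; first by apply: mpow_maxidM => //; apply: uncoord_mpow.
by rewrite hw coord_mul ?uncoordK //; apply: uncoord_mpow.
Qed.

Lemma mult_mx_ker t n v : maxid t -> v *m mult_mx t n = 0 -> mpow n.+2 (t * uncoord n v).
Proof.
move=> ht hv; have hty : mpow n.+1 (t * uncoord n v) by apply/mpow_maxidM/uncoord_mpow.
by apply/(coord_eq0 hty); rewrite coord_mul ?uncoordK //; apply: uncoord_mpow.
Qed.

Lemma coord_rows_comb n d (E : 'M[k]_(d, h n)) (r : 'I_d -> R) :
  coord n (\sum_i r i * uncoord n (row i E)) = (\row_i resid (r i)) *m E.
Proof.
rewrite coord_sum => [|i]; last by apply/mpowM/uncoord_mpow.
rewrite mulmx_sum_row; apply: eq_bigr => i _.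
by rewrite coordZ ?uncoordK ?mxE //; apply: uncoord_mpow.
Qed.

Hypothesis R_m4 : forall x : R, mpow 4 x -> x = 0.

Lemma mpow_high n (x : R) : (4 <= n)%N -> mpow n x -> x = 0.
Proof. by move=> hn /(mpow_leq hn); apply: R_m4. Qed.

Lemma h_high n : (4 <= n)%N -> h n = 0%N.
Proof.
move=> hn; case E: (h n) => [//|d]; exfalso.
have := uncoordK (const_mx 1 : 'rV[k]_(h n)).
rewrite (mpow_high hn (uncoord_mpow _)) coord0 => /rowP.
have i : 'I_(h n) by rewrite E; exact: ord0.
by move/(_ i); rewrite !mxE => /eqP; rewrite eq_sym oner_eq0.
Qed.

Lemma rV_high n (v : 'rV[k]_(h n)) : (4 <= n)%N -> v = 0.
Proof. by move=> hn; apply/rowP => i; exfalso; case: i => i; rewrite h_high. Qed.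

Section Annihilator.
Variables t u : R.
Hypotheses (t_max : maxid t) (u_max : maxid u) (u_lin : ~ mpow 2 u).
Hypothesis ann_t : forall x, t * x = 0 <-> exists y, x = u * y.

Lemma mulr_ann : t * u = 0.
Proof. by apply/ann_t; exists 1; rewrite mulr1. Qed.

Lemma mult_mx_ann n : mult_mx u n *m mult_mx t n.+1 = 0.
Proof.
apply/row_matrixP => i; rewrite row_mul row0.
have -> : row i (mult_mx u n) = coord n.+1 (u * basis n i) by apply/rowP => j; rewrite !mxE.
case: (basis_spec n) => hb _ _.
by rewrite -coord_mul ?mulrA ?mulr_ann ?mul0r ?coord0 //; apply: mpow_maxidM.
Qed.

Lemma coord_ann_ker : (coord 1 u <= kermx (mult_mx t 1))%MS.
Proof.
have hu : mpow 1 u by apply/(mpow1P R_local).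
by apply/sub_kermxP; rewrite -coord_mul // mulr_ann coord0.
Qed.

Lemma rank_mult1 : (\rank (mult_mx t 1) <= h 1 - 1)%N.
Proof.
have hu : mpow 1 u by apply/(mpow1P R_local).
by have := mxrankS coord_ann_ker; rewrite mxrank_ker rank_rV coord_neq0 //; lia.
Qed.

Lemma ker_mult2 (v : 'rV[k]_(h 2)) : v *m mult_mx t 2 = 0 -> (v <= mult_mx u 1)%MS.
Proof.
move=> /(mult_mx_ker t_max) /R_m4 /ann_t [w yw].
have hw : mpow 1 w.
  apply/(mpow1P R_local) => -[w' ww']; apply: u_lin.
  by rewrite -[u]mulr1 -ww' mulrA -yw; apply/mpowMr/uncoord_mpow.
by rewrite -(uncoordK v) yw coord_mul // submxMl.
Qed.

Lemma rank_mult2 : \rank (mult_mx t 2) = (h 2 - \rank (mult_mx u 1))%N.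
Proof.
have -> : \rank (mult_mx u 1) = \rank (kermx (mult_mx t 2)).
  apply/eqP; rewrite eqn_leq; apply/andP; split; apply: mxrankS.
    exact/sub_kermxP/mult_mx_ann.
  by apply/row_subP => i; apply: ker_mult2; rewrite -row_mul mulmx_ker row0.
by rewrite mxrank_ker subKn // rank_leq_row.
Qed.

End Annihilator.

Lemma rank_mult0 (t : R) : maxid t -> ~ mpow 2 t -> \rank (mult_mx t 0) = 1%N.
Proof.
move=> t_max t_lin; apply/eqP; rewrite eqn_leq; apply/andP; split.
  by have := rank_leq_row (mult_mx t 0); have := h0; lia.
rewrite lt0n mxrank_eq0; apply/eqP => t0.
have := coord_mul t_max (I : mpow 0 (1 : R)); rewrite t0 mulmx0 mulr1; apply/eqP.
by apply: coord_neq0 => //; apply/(mpow1P R_local).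
Qed.

Lemma h1_gt0 (t : R) : maxid t -> ~ mpow 2 t -> (0 < h 1)%N.
Proof.
move=> t_max t_lin; have := rank_leq_col (coord 1 t); rewrite rank_rV coord_neq0 //.
exact/(mpow1P R_local).
Qed.

Lemma hilbert_at_m1 : \sum_(n < 4) (-1) ^+ n * (h n)%:Z = 0 -> (h 0 + h 2 = h 1 + h 3)%N.
Proof. by rewrite !big_ord_recr big_ord0 /= add0r; lia. Qed.

Section ExactPair.
Variables t u : R.
Hypotheses (t_max : maxid t) (t_lin : ~ mpow 2 t) (u_max : maxid u) (u_lin : ~ mpow 2 u).
Hypothesis ann_t : forall x, t * x = 0 <-> exists y, x = u * y.
Hypothesis ann_u : forall x, u * x = 0 <-> exists y, x = t * y.
Hypothesis hilb_alt : \sum_(n < 4) (-1) ^+ n * (h n)%:Z = 0.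

Lemma rank_mult_pair :
  [/\ \rank (mult_mx t 1) = (h 1 - 1)%N, \rank (mult_mx t 2) = h 3,
      \rank (mult_mx u 1) = (h 1 - 1)%N & \rank (mult_mx u 2) = h 3].
Proof.
have := hilbert_at_m1 hilb_alt; have := h0; have := h1_gt0 t_max t_lin.
have := rank_mult1 t_max u_max u_lin ann_t; have := rank_mult2 t_max u_max u_lin ann_t.
have := rank_leq_col (mult_mx t 2); have := rank_leq_col (mult_mx u 1).
have := rank_mult1 u_max t_max t_lin ann_u; have := rank_mult2 u_max t_max t_lin ann_u.
have := rank_leq_col (mult_mx u 2); have := rank_leq_col (mult_mx t 1).
by split; lia.
Qed.

Lemma ker_mult0 (v : 'rV[k]_(h 0)) : v *m mult_mx t 0 = 0 -> v = 0.
Proof.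
move=> hv; apply/eqP; rewrite -(mulmx_free_eq0 _ (B := mult_mx t 0)) ?hv //.
by rewrite /row_free rank_mult0 // h0.
Qed.

Lemma ker_multS m (v : 'rV[k]_(h m.+1)) : v *m mult_mx t m.+1 = 0 -> (v <= mult_mx u m)%MS.
Proof.
have [rt1 _ _ ru2] := rank_mult_pair.
case: m v => [|[|[|m]]] v hv.
- have sub_ker : (mult_mx u 0 <= kermx (mult_mx t 1))%MS by exact/sub_kermxP/mult_mx_ann.
  have := mxrank_leqif_sup sub_ker; rewrite mxrank_ker rt1 rank_mult0 //.
  have -> : (h 1 - (h 1 - 1) = 1)%N by have := h1_gt0 t_max t_lin; lia.
  case=> _; rewrite eqxx => /esym ker_sub.
  by apply: submx_trans ker_sub; apply/sub_kermxP.
- exact: (ker_mult2 t_max u_max u_lin ann_t).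
- by apply: submx_full; rewrite /row_full ru2.
- by rewrite (rV_high v) ?sub0mx.
Qed.

Lemma mul_mpow_lift n s : mpow n.+1 (t * s) ->
  exists2 s', mpow n s' & mpow n.+2 (t * s - t * s').
Proof.
have [_ rt2 _ _] := rank_mult_pair.
case: n => [|[|[|n]]] hs.
- by exists s => //; rewrite subrr; apply: mpow0.
- exists s; last by rewrite subrr; apply: mpow0.
  apply/(mpow1P R_local) => -[s1 ss1]; apply: t_lin.
  by rewrite -[t]mulr1 -ss1 mulrA; apply: mpowMr.
- by apply: sub_mult_mxP => //; apply: submx_full; rewrite /row_full rt2.
- by exists 0; [apply: mpow0 | rewrite mulr0 subr0 (mpow_high _ hs) //; apply: mpow0].
Qed.

Lemma sub_mult_mx n x s : mpow n.+1 x -> mpow n.+2 (x - t * s) ->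
  (coord n.+1 x <= mult_mx t n)%MS.
Proof.
move=> hx hxs; have hts : mpow n.+1 (t * s).
  by rewrite -(subKr x (t * s)); apply: mpowB => //; apply: mpowS.
have [s' hs' hss'] := mul_mpow_lift hts.
rewrite (proj2 (coord_eq hx (mpow_maxidM t_max hs'))) ?coord_mul ?submxMl //.
have -> : x - t * s' = (x - t * s) + (t * s - t * s') by rewrite addrA subrK.
exact: mpowD.
Qed.

Variables (G : comNzRingType) (pi : nat -> R -> G).
Hypothesis pi_gr : is_assoc_graded pi.

Lemma gr_homog_ann n x : mpow n x -> mpow n.+2 (t * x) ->
  exists2 z, mpow n.-1 z & pi n x = pi 1 u * pi n.-1 z.
Proof.
move=> hx htx; have hv : coord n x *m mult_mx t n = 0.
  by rewrite -coord_mul //; apply/coord_eq0 => //; apply: mpow_maxidM.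
case: n hx htx hv => [|m] hx htx hv.
  exists 0; first exact: mpow0.
  by rewrite gr0 // mulr0; apply: gr_high => //; apply/(coord_eq0 hx)/ker_mult0.
have [z hz hxz] := sub_mult_mxP u_max hx (ker_multS hv).
exists z => //; rewrite -grM1 //=; last exact/(mpow1P R_local).
exact: (gr_eqm pi_gr hx (mpow_maxidM u_max hz) hxz).
Qed.

Lemma gr_ann g : pi 1 t * g = 0 -> exists g', g = pi 1 u * g'.
Proof.
have [N [x [hx ->]]] := gr_decomp pi_gr g; move=> tg0.
have ht : mpow 1 t by apply/(mpow1P R_local).
pose y n := if n is m.+1 then t * x m else 0.
have hy n : mpow n (y n) by case: n => [|m]; [apply: mpow0 | apply: mpow_maxidM].
have : \sum_(n < N.+1) pi n (y n) = 0.
  rewrite big_ord_recl gr0 // add0r -[RHS]tg0 mulr_sumr.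
  by apply: eq_bigr => i _; rewrite grM1.
move/(gr_sum_eq0 pi_gr hy) => hty; apply: (@gr_factor R G pi u N x) => n hn.
exact: gr_homog_ann (hty n.+1 hn).
Qed.

End ExactPair.

Section InitialForms.
Variables a b : R.
Hypotheses (a_max : maxid a) (a_lin : ~ mpow 2 a) (b_max : maxid b) (b_lin : ~ mpow 2 b).
Hypothesis ann_a : forall x, a * x = 0 <-> exists y, x = b * y.
Hypothesis ann_b : forall x, b * x = 0 <-> exists y, x = a * y.
Hypothesis hilb_alt : \sum_(n < 4) (-1) ^+ n * (h n)%:Z = 0.
Variables (G : comNzRingType) (pi : nat -> R -> G).
Hypothesis pi_gr : is_assoc_graded pi.

Lemma gr1_neq0 (t : R) : maxid t -> ~ mpow 2 t -> pi 1 t != 0.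
Proof. by move=> t_max t_lin; apply/eqP => /(gr_eq0 pi_gr (proj2 (mpow1P R_local t) t_max)). Qed.

Lemma gr1_not_unit (t : R) : maxid t -> ~ is_unit (pi 1 t).
Proof.
move=> /(mpow1P R_local) ht [y ty1].
have : (1 : G) = 0 by rewrite -(expr1n _ 4) -ty1 exprMn -grX // (R_m4 (mpowX 4 ht)) gr0 ?mul0r.
by move/eqP; rewrite oner_eq0.
Qed.

Lemma gr_exact_pair : exact_pair (pi 1 a) (pi 1 b).
Proof.
have ha : mpow 1 a by apply/(mpow1P R_local).
have hb : mpow 1 b by apply/(mpow1P R_local).
have ab0 : pi 1 a * pi 1 b = 0.
  by rewrite -grM1 // (mulr_ann ann_a) gr0.
split; [by split; apply: gr1_neq0 | exact: gr1_not_unit | exact: gr1_not_unit | |] => g; split.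
- exact: (gr_ann a_max a_lin b_max b_lin ann_a ann_b hilb_alt pi_gr).
- by case=> g' ->; rewrite mulrA ab0 mul0r.
- exact: (gr_ann b_max b_lin a_max a_lin ann_b ann_a hilb_alt pi_gr).
- by case=> g' ->; rewrite mulrCA mulrA ab0 mul0r.
Qed.

(** The degree-[n] part of [a* gr_m(R)], as a subspace of [k^(h n)]. *)
Definition image_a n : 'M[k]_(h n) :=
  if n is m.+1 return 'M[k]_(h n) then <<mult_mx a m>>%MS else 0.

Lemma image_a0 : image_a 0 = 0. Proof. by []. Qed.
Lemma image_aS m : image_a m.+1 = <<mult_mx a m>>%MS. Proof. by []. Qed.

Lemma image_aP n x : mpow n x -> (coord n x <= image_a n)%MS ->
  exists2 s, mpow n.-1 s & mpow n.+1 (x - a * s).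
Proof.
case: n x => [|m] x hx; last by rewrite image_aS genmxE => /(sub_mult_mxP a_max hx).
rewrite image_a0 submx0 => /eqP /(coord_eq0 hx) hx1; exists 0; first exact: mpow0.
by rewrite mulr0 subr0.
Qed.

Lemma image_a_sub n x s : mpow n x -> mpow n.+1 (x - a * s) -> (coord n x <= image_a n)%MS.
Proof.
case: n x => [|m] x hx hxs; last first.
  by rewrite image_aS genmxE; apply: (sub_mult_mx a_max a_lin b_max b_lin ann_a ann_b hilb_alt) hxs.
rewrite image_a0 (proj2 (coord_eq0 hx)) ?sub0mx // -(subrK (a * s) x).
by apply: mpowD => //; apply/(mpow1P R_local)/(maxidMr R_local).
Qed.

Lemma gr_image_a n x : mpow n x -> (coord n x <= image_a n)%MS ->
  exists2 z, mpow n.-1 z & pi n x = pi 1 a * pi n.-1 z.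
Proof.
move=> hx /(image_aP hx) [s hs hxs]; case: n hx hs hxs => [|m] hx hs hxs.
  exists 0; first exact: mpow0.
  rewrite !gr0 // mulr0; apply: gr_high => //; rewrite -(subrK (a * s) x).
  by apply: mpowD => //; apply/(mpow1P R_local)/(maxidMr R_local).
exists s => //; rewrite -grM1 //=; last exact/(mpow1P R_local).
exact: (gr_eqm pi_gr hx (mpow_maxidM a_max hs) hxs).
Qed.

Lemma rank_image_a_compl n :
  (\rank (image_a n)^C)%:Z = \sum_(i < n.+1) (-1) ^+ (n - i) * (h i)%:Z.
Proof.
have [ra1 ra2 _ _] := rank_mult_pair a_max a_lin b_max b_lin ann_a ann_b hilb_alt.
have altS := alt_sumS (fun i => (h i)%:Z).
have alt := hilbert_at_m1 hilb_alt; have h1 := h1_gt0 a_max a_lin; have e0 := h0.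
have T0 : \sum_(i < 1) (-1) ^+ (0 - i) * (h i)%:Z = 1 by rewrite big_ord1 e0.
have T3 : \sum_(i < 4) (-1) ^+ (3 - i) * (h i)%:Z = 0 by rewrite !altS T0; lia.
have Thigh m : \sum_(i < m.+4) (-1) ^+ (m.+3 - i) * (h i)%:Z = 0.
  by elim: m => [//|m IH]; rewrite altS IH h_high.
rewrite mxrank_compl; case: n => [|[|[|[|m]]]].
- by rewrite image_a0 mxrank0 T0 e0.
- by rewrite image_aS genmxE rank_mult0 // altS T0; lia.
- by rewrite image_aS genmxE ra1 !altS T0; lia.
- by rewrite image_aS genmxE ra2 T3 subnn.
- have hm : h m.+4 = 0%N by apply: h_high.
  by rewrite Thigh; lia.
Qed.

(** Lifts of a basis of a complement of [image_a n]: their images form bases of the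
    degree-[n] parts of both [gr_(m/aR)(R/aR)] and [gr_m(R)/a* gr_m(R)]. *)
Definition quot_basis n (i : 'I_(\rank (image_a n)^C)%MS) : R :=
  uncoord n (row i (row_base (image_a n)^C)%MS).
Arguments quot_basis : clear implicits.

Lemma quot_basis_mpow n i : mpow n (quot_basis n i).
Proof. exact: uncoord_mpow. Qed.

Lemma quot_comb_mpow n c : mpow n (\sum_i c i * quot_basis n i).
Proof. by apply: mpow_sum => i; apply/mpowM/quot_basis_mpow. Qed.

Lemma quot_basis_span n x : mpow n x ->
  exists c, (coord n (x - \sum_i c i * quot_basis n i) <= image_a n)%MS.
Proof.
move=> hx; have [c hc] := compl_base_span (image_a n) (coord n x).
exists (fun i => unresid (c 0 i)).
rewrite coordB //; last exact: quot_comb_mpow.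
rewrite /quot_basis coord_rows_comb.
suff -> : \row_i resid (unresid (c 0 i)) = c by [].
by apply/rowP => i; rewrite !mxE unresidK.
Qed.

Lemma quot_basis_free n (r : 'I_(\rank (image_a n)^C)%MS -> R) :
  (coord n (\sum_i r i * quot_basis n i) <= image_a n)%MS -> forall i, maxid (r i).
Proof.
rewrite /quot_basis coord_rows_comb => /compl_base_free /rowP r0 i.
by apply/(resid_eq0 R_local); have := r0 i; rewrite !mxE.
Qed.

Section Quotient.
Variables (S : comNzRingType) (q : {rmorphism R -> S}).
Hypothesis q_surj : forall y : S, exists x, q x = y.
Hypothesis q_ker : forall x, q x = 0 <-> exists r, x = a * r.
Variables (G' : comNzRingType) (pi' : nat -> S -> G').
Hypothesis pi'_gr : is_assoc_graded pi'.
Variables (Q : comNzRingType) (rho : {rmorphism G -> Q}).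
Hypothesis rho_surj : forall z : Q, exists g, rho g = z.
Hypothesis rho_ker : forall g, rho g = 0 <-> exists g', g = pi 1 a * g'.

Lemma q_maxid x : maxid x -> maxid (q x).
Proof.
move=> hx [y xy1]; have [z zy] := q_surj y; apply: (@not_maxid1 R).
have /q_ker [r xz1] : q (x * z - 1) = 0 by rewrite rmorphB rmorphM zy xy1 rmorph1 subrr.
rewrite -(subKr (x * z) 1) xz1.
by apply: (maxidB R_local); apply: (maxidMr R_local).
Qed.

Lemma q_mpow n x : mpow n x -> mpow n (q x).
Proof.
elim: n x => [//|n IH] x /=; elim=> [|u v hu hv|u v _ IHu _ IHv].
- by rewrite rmorph0; apply: ip_zero.
- by rewrite rmorphM; apply: ip_prod; [apply: q_maxid | apply: IH].
- by rewrite rmorphD; apply: ip_add.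
Qed.

Lemma q_mpowP n y : mpow n y -> exists2 x, mpow n x & q x = y.
Proof.
elim: n y => [|n IH] y /=; first by have [x <-] := q_surj y; exists x.
elim=> [|u v hu hv|u v _ [x1 h1 <-] _ [x2 h2 <-]].
- by exists 0; [apply: ip_zero | rewrite rmorph0].
- have [x1 qx1] := q_surj u; have [x2 h2 <-] := IH v hv.
  exists (x1 * x2); last by rewrite rmorphM qx1.
  apply: ip_prod => // -[w xw]; apply: hu; exists (q w).
  by rewrite -qx1 -rmorphM xw rmorph1.
- by exists (x1 + x2); [apply: ip_add | rewrite rmorphD].
Qed.

Lemma q_mpowS n x : mpow n (q x) -> exists r, mpow n (x - a * r).
Proof.
move=> /q_mpowP [w hw qw]; have /q_ker [r xwr] : q (x - w) = 0 by rewrite rmorphB qw subrr.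
by exists r; rewrite -xwr opprB addrC subrK.
Qed.

Lemma image_a_q n x : mpow n x -> mpow n.+1 (q x) -> (coord n x <= image_a n)%MS.
Proof. by move=> hx /q_mpowS [r hr]; apply: image_a_sub hr. Qed.

(** The map [gr_m(R) -> gr_(m/aR)(R/aR)] induced by [q]; by [gr_mapE] it does not
    depend on the chosen homogeneous decomposition. *)
Definition gr_map (g : G) : G' := \sum_(n < gr_size pi_gr g) pi' n (q (gr_comp pi_gr g n)).

Lemma gr_map_widen N P (x : nat -> R) : (N <= P)%N ->
  \sum_(n < N) pi' n (q (x n)) = \sum_(n < P) pi' n (q (if (n < N)%N then x n else 0)).
Proof.
move=> NP; rewrite (@gr_widen _ _ pi' pi'_gr N P (fun n => q (x n)) NP).
by apply: eq_bigr => i _; case: ifP; rewrite ?rmorph0.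
Qed.

Lemma gr_mapE N (x : nat -> R) : (forall n, mpow n (x n)) ->
  gr_map (\sum_(n < N) pi n (x n)) = \sum_(n < N) pi' n (q (x n)).
Proof.
move=> hx; set g := \sum_(n < N) pi n (x n); have [hy gE] := gr_compP pi_gr g.
set M := gr_size pi_gr g; set y := gr_comp pi_gr g; pose P := (N + M)%N.
pose x' n := if (n < N)%N then x n else 0; pose y' n := if (n < M)%N then y n else 0.
have hx' := mpow_pad N hx; have hy' := mpow_pad M hy.
have hyx n : mpow n (y' n - x' n) by apply: mpowB.
have : \sum_(n < P) pi n (y' n - x' n) = 0.
  rewrite (eq_bigr (fun n : 'I_P => pi n (y' n) - pi n (x' n))) => [|i _]; last exact: grB.
  rewrite sumrB /x' /y' -(@gr_widen _ _ pi pi_gr M P y (leq_addl N M)).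
  by rewrite -(@gr_widen _ _ pi pi_gr N P x (leq_addr M N)) -gE subrr.
move/(gr_sum_eq0 pi_gr hyx) => yx.
rewrite /gr_map -/M -/y (gr_map_widen _ (leq_addl N M)) (gr_map_widen _ (leq_addr M N)).
apply: eq_bigr => i _; apply: (gr_eqm pi'_gr); try exact: q_mpow.
by rewrite -rmorphB; apply/q_mpow/yx.
Qed.

Lemma gr_map_homog n x : mpow n x -> gr_map (pi n x) = pi' n (q x).
Proof.
move=> hx; have hF m : mpow m (if m == n :> nat then x else 0).
  by case: eqP => [->|_] //; apply: mpow0.
rewrite -(gr_single pi_gr) (gr_mapE _ hF) -(gr_single pi'_gr); apply: eq_bigr => i _.
by case: eqP; rewrite ?rmorph0.
Qed.

Lemma gr_mapD g1 g2 : gr_map (g1 + g2) = gr_map g1 + gr_map g2.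
Proof.
have [h1 e1] := gr_compP pi_gr g1; have [h2 e2] := gr_compP pi_gr g2.
set N1 := gr_size pi_gr g1 in e1 *; set N2 := gr_size pi_gr g2 in e2 *.
set x1 := gr_comp pi_gr g1 in h1 e1 *; set x2 := gr_comp pi_gr g2 in h2 e2 *.
pose P := (N1 + N2)%N.
pose x n := (if (n < N1)%N then x1 n else 0) + (if (n < N2)%N then x2 n else 0).
have hx n : mpow n (x n) by apply: mpowD; apply: mpow_pad.
have -> : g1 + g2 = \sum_(n < P) pi n (x n).
  rewrite {1}e1 {1}e2 (gr_widen pi_gr _ (leq_addr N2 N1)) (gr_widen pi_gr _ (leq_addl N1 N2)).
  by rewrite -big_split; apply: eq_bigr => i _; rewrite grD //; apply: mpow_pad.
rewrite gr_mapE // /gr_map -/N1 -/N2 -/x1 -/x2.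
rewrite (gr_map_widen _ (leq_addr N2 N1)) (gr_map_widen _ (leq_addl N1 N2)) -big_split.
by apply: eq_bigr => i _; rewrite rmorphD grD //; apply/q_mpow/mpow_pad.
Qed.

Lemma gr_map_sum (I : finType) (F : I -> G) : gr_map (\sum_i F i) = \sum_i gr_map (F i).
Proof.
apply: (big_morph _ gr_mapD).
by have := @gr_mapE 0 (fun _ => 0) (fun n => @mpow0 R n); rewrite !big_ord0.
Qed.

Lemma gr_mapM g1 g2 : gr_map (g1 * g2) = gr_map g1 * gr_map g2.
Proof.
have [h1 ->] := gr_compP pi_gr g1; have [h2 ->] := gr_compP pi_gr g2.
rewrite !gr_mapE // mulr_suml gr_map_sum mulr_suml; apply: eq_bigr => i _.
rewrite !mulr_sumr gr_map_sum; apply: eq_bigr => j _.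
rewrite -grM // gr_map_homog ?rmorphM ?grM //; try exact: q_mpow.
exact: mpow_mul.
Qed.

Lemma gr_mapB g1 g2 : gr_map (g1 - g2) = gr_map g1 - gr_map g2.
Proof. by apply: (addIr (gr_map g2)); rewrite -gr_mapD !subrK. Qed.

Lemma gr_map1 : gr_map 1 = 1.
Proof. by rewrite -(gr1 pi_gr) gr_map_homog // rmorph1 (gr1 pi'_gr). Qed.

Lemma gr_map_ann g : gr_map (pi 1 a * g) = 0.
Proof.
have ha : mpow 1 a by apply/(mpow1P R_local).
have qa : q a = 0 by apply/q_ker; exists 1; rewrite mulr1.
by rewrite gr_mapM gr_map_homog // qa gr0 ?mul0r.
Qed.

Lemma gr_map_ker g : gr_map g = 0 -> exists g', g = pi 1 a * g'.
Proof.
have [hx ->] := gr_compP pi_gr g; rewrite gr_mapE //.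
move=> /(gr_sum_eq0 pi'_gr (fun n => q_mpow (hx n))) hq.
by apply: (@gr_factor R G pi a) => n /hq /(image_a_q (hx n)) /(gr_image_a (hx n)).
Qed.

Definition gr_quot (z : Q) : G' :=
  gr_map (proj1_sig (constructive_indefinite_description _ (rho_surj z))).

Lemma gr_quot_rho g : gr_quot (rho g) = gr_map g.
Proof.
rewrite /gr_quot; case: constructive_indefinite_description => g0 /= rho_g0.
have /rho_ker [g' gg'] : rho (g0 - g) = 0 by rewrite rmorphB rho_g0 subrr.
by rewrite -(subrK g g0) gr_mapD gg' gr_map_ann add0r.
Qed.

Lemma gr_quot_zmod : zmod_morphism gr_quot.
Proof.
move=> z1 z2; have [g1 <-] := rho_surj z1; have [g2 <-] := rho_surj z2.
by rewrite -rmorphB !gr_quot_rho gr_mapB.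
Qed.

Lemma gr_quot_monoid : monoid_morphism gr_quot.
Proof.
split=> [|z1 z2]; first by rewrite -(rmorph1 rho) gr_quot_rho gr_map1.
have [g1 <-] := rho_surj z1; have [g2 <-] := rho_surj z2.
by rewrite -rmorphM !gr_quot_rho gr_mapM.
Qed.

HB.instance Definition _ := GRing.isZmodMorphism.Build Q G' gr_quot gr_quot_zmod.
HB.instance Definition _ := GRing.isMonoidMorphism.Build Q G' gr_quot gr_quot_monoid.

Lemma gr_quot_inj : injective gr_quot.
Proof.
move=> z1 z2 e; have [g rho_g] := rho_surj (z1 - z2).
have /gr_map_ker [g' gg'] : gr_map g = 0 by rewrite -gr_quot_rho rho_g gr_quot_zmod e subrr.
by apply/eqP; rewrite -subr_eq0 -rho_g; apply/eqP/rho_ker; exists g'.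
Qed.

Lemma gr_quot_surj y : exists z, gr_quot z = y.
Proof.
have [N [y' [hy ->]]] := gr_decomp pi'_gr y.
have hx n : exists x, mpow n x /\ q x = y' n by have [x] := q_mpowP (hy n); exists x.
pose x n := proj1_sig (constructive_indefinite_description _ (hx n)).
have [hxn qx] : (forall n, mpow n (x n)) /\ (forall n, q (x n) = y' n).
  by split=> n; rewrite /x; case: constructive_indefinite_description => ? [].
exists (rho (\sum_(n < N) pi n (x n))).
by rewrite gr_quot_rho gr_mapE //; apply: eq_bigr => n _; rewrite qx.
Qed.

Lemma gr_quot_iso : exists psi : {rmorphism Q -> G'}, bijective psi /\
  forall n x, mpow n x -> psi (rho (pi n x)) = pi' n (q x).
Proof.
exists gr_quot; split=> [|n x hx]; last by rewrite /= gr_quot_rho gr_map_homog.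
pose inv y := proj1_sig (constructive_indefinite_description _ (gr_quot_surj y)).
have invK y : gr_quot (inv y) = y by rewrite /inv; case: constructive_indefinite_description.
by exists inv => [z|y]; [apply: gr_quot_inj; rewrite invK | apply: invK].
Qed.


Lemma q_image_a n x : mpow n x -> (coord n x <= image_a n)%MS -> mpow n.+1 (q x).
Proof.
move=> hx /(image_aP hx) [s _ hxs].
have qa : q a = 0 by apply/q_ker; exists 1; rewrite mulr1.
by have := q_mpow hxs; rewrite rmorphB rmorphM qa mul0r subr0.
Qed.

Lemma rho_image_a n x : mpow n x -> (coord n x <= image_a n)%MS -> rho (pi n x) = 0.
Proof. by move=> hx /(gr_image_a hx) [z _ ->]; apply/rho_ker; exists (pi n.-1 z). Qed.

Lemma rho_eq0_image_a n x : mpow n x -> rho (pi n x) = 0 -> (coord n x <= image_a n)%MS.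
Proof.
move=> hx rx0; have : pi' n (q x) = 0 by rewrite -gr_map_homog // -gr_quot_rho rx0 raddf0.
by move/(gr_eq0 pi'_gr (q_mpow hx)); apply: image_a_q.
Qed.

Lemma hilb_rank_quot n : hilb_rank S n (\rank (image_a n)^C).
Proof.
have q_comb c : q (\sum_i c i * quot_basis n i) = \sum_i q (c i) * q (quot_basis n i).
  by rewrite rmorph_sum; apply: eq_bigr => i _; rewrite rmorphM.
exists (fun i => q (quot_basis n i)); split; first by move=> i; apply/q_mpow/quot_basis_mpow.
split=> [_ /q_mpowP [x hx <-] | r hr i].
  have [c hc] := quot_basis_span hx; exists (fun i => q (c i)).
  by rewrite -q_comb -rmorphB; apply: q_image_a hc; apply/mpowB/quot_comb_mpow.
have [t qt] : exists t, forall i, q (t i) = r i.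
  by apply: (choice (fun j (t : R) => q t = r j)) => j; apply: q_surj.
rewrite -qt; apply: q_maxid.
apply: quot_basis_free; apply: image_a_q; first exact: quot_comb_mpow.
by rewrite q_comb (eq_bigr _ (fun i _ => congr1 (fun y => y * _) (qt i))).
Qed.

Lemma rho_comb n c :
  rho (pi n (\sum_i c i * quot_basis n i)) = \sum_i rho (pi 0 (c i)) * rho (pi n (quot_basis n i)).
Proof.
rewrite gr_sum // => [|i]; last exact/mpowM/quot_basis_mpow.
rewrite rmorph_sum; apply: eq_bigr => i _.
by rewrite -rmorphM -(grM pi_gr (I : mpow 0 (c i)) (quot_basis_mpow i)).
Qed.

Definition quot_hom m (z : Q) : Prop := exists g, gr_hom pi m g /\ z = rho g.

Lemma quot_hom_rho m x : mpow m x -> quot_hom m (rho (pi m x)).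
Proof. by move=> hx; exists (pi m x); split=> //; exists x. Qed.

Lemma graded_rank_quot n : graded_rank quot_hom n (\rank (image_a n)^C).
Proof.
exists (fun i => rho (pi n (quot_basis n i))).
split=> [i|]; first exact/quot_hom_rho/quot_basis_mpow.
split=> [_ [_ [[x [hx ->]] ->]] | cc hcc sum0 i].
  have [c hc] := quot_basis_span hx; exists (fun i => rho (pi 0 (c i))).
  split=> [i|]; first exact: quot_hom_rho.
  have /eqP := rho_image_a (mpowB hx (quot_comb_mpow c)) hc.
  by rewrite grB //; [rewrite rmorphB rho_comb subr_eq0 => /eqP | apply: quot_comb_mpow].
have [t ct] : exists t, forall i, cc i = rho (pi 0 (t i)).
  apply: (choice (fun j (t : R) => cc j = rho (pi 0 t))) => j.
  by have [_ [[t [_ ->]] ->]] := hcc j; exists t.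
have : (coord n (\sum_i t i * quot_basis n i) <= image_a n)%MS.
  apply: rho_eq0_image_a; first exact: quot_comb_mpow.
  by rewrite rho_comb -[RHS]sum0; apply: eq_bigr => j _; rewrite ct.
by move/quot_basis_free/(_ i)/(mpow1P R_local) => ti; rewrite ct gr_high // raddf0.
Qed.

End Quotient.

End InitialForms.
End Coordinates.

Theorem theorem2p5
  (R : comNzRingType) (a b : R)
  (* the Hilbert function h = (rank_k m^n/m^(n+1))_n of R *)
  (h : nat -> nat)
  (* gr_m(R) *)
  (G : comNzRingType) (pi : nat -> R -> G)
  (* R/aR, with the canonical surjection q *)
  (S : comNzRingType) (q : {rmorphism R -> S})
  (* gr_{m/aR}(R/aR) *)
  (G' : comNzRingType) (pi' : nat -> S -> G')
  (* gr_m(R)/a* gr_m(R), with the canonical surjection rho *)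
  (Q : comNzRingType) (rho : {rmorphism G -> Q}) :
  noetherian R -> local_ring R ->
  (forall x : R, mpow 4 x -> x = 0) ->
  (forall n, hilb_rank R n (h n)) ->
  (* H_R(-1) = 0 (H_R is a polynomial of degree <= 3 since m^4 = 0) *)
  \sum_(n < 4) (-1) ^+ n * (h n)%:Z = 0 ->
  maxid a -> ~ mpow 2 a -> maxid b -> ~ mpow 2 b ->
  exact_pair a b ->
  is_assoc_graded pi ->
  (forall y : S, exists x, q x = y) ->
  (forall x, q x = 0 <-> exists r, x = a * r) ->
  is_assoc_graded pi' ->
  (forall z : Q, exists g, rho g = z) ->
  (forall g, rho g = 0 <-> exists g', g = pi 1%N a * g') ->
  exact_pair (pi 1%N a) (pi 1%N b) /\
  (exists psi : {rmorphism Q -> G'}, bijective psi /\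
     forall n x, mpow n x -> psi (rho (pi n x)) = pi' n (q x)) /\
  (exists c : nat -> nat,
     (forall n, (c n)%:Z = \sum_(i < n.+1) (-1) ^+ (n - i) * (h i)%:Z) /\
     (forall n, graded_rank (fun m z => exists g, gr_hom pi m g /\ z = rho g) n (c n)) /\
     (forall n, hilb_rank S n (c n))).
Proof.
move=> _ R_local R_m4 R_hilb hilb_alt a_max a_lin b_max b_lin [_ _ _ ann_a ann_b]
  pi_gr q_surj q_ker pi'_gr rho_surj rho_ker.
split; first exact: (gr_exact_pair R_local R_hilb R_m4 a_max a_lin b_max b_lin ann_a ann_b
  hilb_alt pi_gr).
split; first exact: (gr_quot_iso R_local R_hilb R_m4 a_max a_lin b_max b_lin ann_a ann_b
  hilb_alt pi_gr q_surj q_ker pi'_gr rho_surj rho_ker).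
exists (fun n => \rank (image_a R_local R_hilb a n)^C); split; [|split] => n.
- exact: (rank_image_a_compl R_local R_hilb R_m4 a_max a_lin b_max b_lin ann_a ann_b hilb_alt).
- exact: (graded_rank_quot R_local R_hilb R_m4 a_max a_lin b_max b_lin ann_a ann_b
    hilb_alt pi_gr q_surj q_ker pi'_gr rho_surj rho_ker).
- exact: (hilb_rank_quot R_local R_hilb R_m4 a_max a_lin b_max b_lin ann_a ann_b
    hilb_alt q_surj q_ker).
Qed.
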